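(* Let $B$ be a C*-algebra and $A$ a regular subalgebra of $B$. Then: (i) for every closed two-sided ideal $J$ of $B$, $J\cap A$ is normalizer-invariant; (ii) every normalizer-invariant closed two-sided ideal of $A$ is $B$-invariant; (iii) $A$ satisfies axiom (inv) relative to $B$.
   Context: $A\subseteq B$ is a closed *-subalgebra. A normalizer of $A$ in $B$ is an element $n\in B$ with $n^*An\subseteq A$ and $nAn^*\subseteq A$. $A$ is a regular subalgebra of $B$ if the normalizers span a dense subspace of $B$ and $A$ contains an approximate unit for $B$. A subset $S\subseteq A$ is normalizer-invariant if $nSn^*\subseteq S$ for every normalizer $n$. For $S\subseteq B$, $S$ is $B$-invariant if $[SB]=[BS]$, where $[\cdot]$ is closed linear span. $A$ satisfies axiom (inv) relative to $B$ if $J\cap A$ is $B$-invariant for every closed two-sided ideal $J$ of $B$. *)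

From mathcomp Require Import all_boot all_order all_algebra.
From mathcomp Require Import complex Rstruct.
Set Implicit Arguments. Unset Strict Implicit. Unset Printing Implicit Defensive.
Import Order.TTheory GRing.Theory Num.Theory.
Local Open Scope ring_scope.

Notation RR := Rdefinitions.R.
Notation CC := (RR[i]).

Section CstarDefs.
Variable V : lmodType CC.

Record cstar_algebra := CstarAlgebra {
  cmul : V -> V -> V;
  cstar : V -> V;
  cnorm : V -> RR;
  cmulA : forall x y z, cmul x (cmul y z) = cmul (cmul x y) z;
  cmulDl : forall x y z, cmul (x + y) z = cmul x z + cmul y z;
  cmulDr : forall x y z, cmul x (y + z) = cmul x y + cmul x z;
  cmulZl : forall (a : CC) x y, cmul (a *: x) y = a *: cmul x y;
  cmulZr : forall (a : CC) x y, cmul x (a *: y) = a *: cmul x y;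
  cstarK : forall x, cstar (cstar x) = x;
  cstarD : forall x y, cstar (x + y) = cstar x + cstar y;
  cstarZ : forall (a : CC) x, cstar (a *: x) = (conjc a) *: cstar x;
  cstarM : forall x y, cstar (cmul x y) = cmul (cstar y) (cstar x);
  cnorm_eq0 : forall x, cnorm x = 0 -> x = 0;
  cnormD : forall x y, cnorm (x + y) <= cnorm x + cnorm y;
  cnormZ : forall (a : CC) x, cnorm (a *: x) = Normc.normc a * cnorm x;
  cnormM : forall x y, cnorm (cmul x y) <= cnorm x * cnorm y;
  cnorm_cstar : forall x, cnorm (cmul (cstar x) x) = cnorm x ^+ 2;
  ccomplete : forall u : nat -> V,
    (forall e : RR, 0 < e -> exists N, forall m n, (N <= m)%N -> (N <= n)%N ->
        cnorm (u m - u n) < e) ->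
    exists l, forall e : RR, 0 < e -> exists N, forall n, (N <= n)%N ->
        cnorm (u n - l) < e
}.

Variable B : cstar_algebra.
Local Notation "x * y" := (cmul B x y) : ring_scope.
Local Notation "x ^*" := (cstar B x) : ring_scope.
Local Notation "`| x |" := (cnorm B x) : ring_scope.

Definition seq_cvg (u : nat -> V) (l : V) : Prop :=
  forall e : RR, 0 < e -> exists N, forall n, (N <= n)%N -> `|u n - l| < e.

Definition is_closed (S : V -> Prop) : Prop :=
  forall (u : nat -> V) (l : V), (forall n, S (u n)) -> seq_cvg u l -> S l.

Definition is_subspace (S : V -> Prop) : Prop :=
  S 0 /\ (forall x y, S x -> S y -> S (x + y)) /\
  (forall (a : CC) x, S x -> S (a *: x)).

Definition clspan (S : V -> Prop) : V -> Prop :=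
  fun v => forall T : V -> Prop, is_subspace T -> is_closed T ->
    (forall x, S x -> T x) -> T v.

Definition prodset (S T : V -> Prop) : V -> Prop :=
  fun v => exists s t, S s /\ T t /\ v = s * t.

Definition setB : V -> Prop := fun _ => True.

Definition closed_star_subalgebra (A : V -> Prop) : Prop :=
  is_subspace A /\ is_closed A /\
  (forall x y, A x -> A y -> A (x * y)) /\ (forall x, A x -> A (x ^*)).

Definition normalizer (A : V -> Prop) (n : V) : Prop :=
  (forall a, A a -> A (n ^* * a * n)) /\ (forall a, A a -> A (n * a * n ^*)).

Definition contains_approx_unit (A : V -> Prop) : Prop :=
  exists (I : Type) (le : I -> I -> Prop) (e : I -> V),
    (exists i : I, True) /\
    (forall i j k, le i j -> le j k -> le i k) /\
    (forall i j, exists k, le i k /\ le j k) /\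
    (forall i, A (e i)) /\
    (forall (b : V) (eps : RR), 0 < eps -> exists i0, forall i, le i0 i ->
        `|e i * b - b| < eps /\ `|b * e i - b| < eps).

Definition regular_subalgebra (A : V -> Prop) : Prop :=
  (forall b, clspan (normalizer A) b) /\ contains_approx_unit A.

Definition closed_ideal (J : V -> Prop) : Prop :=
  is_subspace J /\ is_closed J /\
  (forall x j, J j -> J (x * j)) /\ (forall x j, J j -> J (j * x)).

Definition closed_ideal_of (A I : V -> Prop) : Prop :=
  (forall x, I x -> A x) /\ is_subspace I /\ is_closed I /\
  (forall a i, A a -> I i -> I (a * i)) /\ (forall a i, A a -> I i -> I (i * a)).

Definition normalizer_invariant (A S : V -> Prop) : Prop :=
  forall n, normalizer A n -> forall s, S s -> S (n * s * n ^*).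

Definition B_invariant (S : V -> Prop) : Prop :=
  forall v, clspan (prodset S setB) v <-> clspan (prodset setB S) v.

Definition axiom_inv (A : V -> Prop) : Prop :=
  forall J, closed_ideal J -> B_invariant (fun x => J x /\ A x).

End CstarDefs.

(* The key fact is that [x] lies in [[B I]] as soon as [x^* x] lies in the
   subspace [I]: with [h = x^* x] and [|x| <= 1], [x - x (1 - h^2)^m] is in the
   span of [B I] while [|x (1 - h^2)^m|^4 (2m+1) <= 1], an estimate obtained
   without functional calculus by writing [h] as the real part of the unitary
   [h + i sqrt (1 - h^2)] of the unitization.
   For [s] in a normalizer-invariant ideal [I] of [A] and a normalizer [n],
   [(s n)^* (s n) = n^* (s^* s) n] is in [I], so [s n] is in [[B I]]; as the
   normalizers span a dense subspace, [[I B]] is contained in [[B I]], and the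
   opposite algebra gives the other inclusion.  Part (iii) is part (ii)
   applied to [J] intersected with [A]. *)

From HB Require Import structures.
From mathcomp Require Import all_boot all_order all_algebra.
From mathcomp Require Import complex Rstruct.
From mathcomp Require Import ring lra zify.
Set Implicit Arguments. Unset Strict Implicit. Unset Printing Implicit Defensive.
Import Order.TTheory GRing.Theory Num.Theory.
Local Open Scope ring_scope.

Section CstarAlgebraTheory.
Variable V : lmodType CC.
Variable B : cstar_algebra V.
Local Notation "x ** y" := (cmul B x y) (at level 40, left associativity).
Local Notation "x ^†" := (cstar B x) (at level 2, format "x ^†").
Local Notation nm := (cnorm B).

Lemma cmul0l y : 0 ** y = 0.
Proof. by apply: (@addrI _ (0 ** y)); rewrite -cmulDl !addr0. Qed.

Lemma cmul0r y : y ** 0 = 0.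
Proof. by apply: (@addrI _ (y ** 0)); rewrite -cmulDr !addr0. Qed.

Lemma cmulNl x y : (- x) ** y = - (x ** y).
Proof. by apply/eqP; rewrite -addr_eq0 -cmulDl addNr cmul0l. Qed.

Lemma cmulNr x y : x ** (- y) = - (x ** y).
Proof. by apply/eqP; rewrite -addr_eq0 -cmulDr addNr cmul0r. Qed.

Lemma cmulBl x y z : (x - y) ** z = x ** z - y ** z.
Proof. by rewrite cmulDl cmulNl. Qed.

Lemma cmulBr x y z : z ** (x - y) = z ** x - z ** y.
Proof. by rewrite cmulDr cmulNr. Qed.

Lemma cstar0 : (0 : V)^† = 0.
Proof. by apply: (@addrI _ (cstar B 0)); rewrite -cstarD !addr0. Qed.

Lemma cstarN x : (- x)^† = - x^†.
Proof. by apply/eqP; rewrite -addr_eq0 -cstarD addNr cstar0. Qed.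

Lemma cstarB x y : (x - y)^† = x^† - y^†.
Proof. by rewrite cstarD cstarN. Qed.

Lemma cstar_cstar_mul x : (x^† ** x)^† = x^† ** x.
Proof. by rewrite cstarM cstarK. Qed.

Lemma cnormZ_real (r : RR) x : nm (r%:C%C *: x) = `|r| * nm x.
Proof. by rewrite cnormZ /Normc.normc /= expr0n /= addr0 sqrtr_sqr. Qed.

Lemma cnorm0 : nm 0 = 0.
Proof. by rewrite -(scale0r (0 : V)) cnormZ Normc.normc0 mul0r. Qed.

Lemma cnormN x : nm (- x) = nm x.
Proof. by rewrite -scaleN1r -(rmorphN1 (real_complex RR)) cnormZ_real normrN1 mul1r. Qed.

Lemma cnorm_ge0 x : 0 <= nm x.
Proof. by have := cnormD B x (- x); rewrite subrr cnorm0 cnormN; lra. Qed.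

Lemma cnorm_subC x y : nm (x - y) = nm (y - x).
Proof. by rewrite -cnormN opprB. Qed.

Lemma cnormMn x n : nm (x *+ n) = n%:R * nm x.
Proof.
by rewrite -scaler_nat -(rmorph_nat (real_complex RR)) cnormZ_real normr_nat.
Qed.

Lemma cnormMz x k : nm (x *~ k) = `|k|%:~R * nm x.
Proof.
by rewrite -scaler_int -(rmorph_int (real_complex RR)) cnormZ_real intr_norm.
Qed.

Lemma cnorm_sum (I : Type) (r : seq I) (F : I -> V) :
  nm (\sum_(i <- r) F i) <= \sum_(i <- r) nm (F i).
Proof.
elim: r => [|i r IH]; first by rewrite !big_nil cnorm0.
by rewrite !big_cons; apply: le_trans (cnormD B _ _) _; apply: lerD.
Qed.

Lemma cnorm_star x : nm x^† = nm x.
Proof.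
suff le_star y : nm y <= nm y^†.
  by apply/le_anti; rewrite le_star /= -{2}(cstarK B x) le_star.
have [->|y_ne0] := eqVneq (nm y) 0; first exact: cnorm_ge0.
have y_gt0 : 0 < nm y by rewrite lt_def y_ne0 cnorm_ge0.
by rewrite -(ler_pM2r y_gt0) -expr2 -cnorm_cstar cnormM.
Qed.

Lemma cnorm_mul_cstar x : nm (x ** x^†) = nm x ^+ 2.
Proof. by rewrite -{1}(cstarK B x) cnorm_cstar cnorm_star. Qed.

Lemma cvg_lipschitz (u f : nat -> V) l L (K : RR) : 0 <= K ->
  (forall n, nm (f n - L) <= K * nm (u n - l)) -> seq_cvg B u l -> seq_cvg B f L.
Proof.
move=> K_ge0 Hf Hu e e_gt0.
have [N HN] := Hu (e / (K + 1)) (divr_gt0 e_gt0 (ltr_wpDl K_ge0 ltr01)).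
exists N => n /HN Hn; apply: le_lt_trans (Hf n) _.
apply: le_lt_trans (ler_wpM2l K_ge0 (ltW Hn)) _.
by rewrite mulrA ltr_pdivrMr; lra.
Qed.

Lemma cvg_unique (u : nat -> V) l1 l2 : seq_cvg B u l1 -> seq_cvg B u l2 -> l1 = l2.
Proof.
move=> H1 H2; apply/subr0_eq/(@cnorm_eq0 _ B)/le_anti.
rewrite cnorm_ge0 andbT; apply: gt_ge => e e_gt0.
have e2_gt0 : 0 < e / 2 by lra.
have [N1 HN1] := H1 _ e2_gt0; have [N2 HN2] := H2 _ e2_gt0.
have := HN1 _ (leq_maxl N1 N2); have := HN2 _ (leq_maxr N1 N2).
have := cnormD B (u (maxn N1 N2) - l2) (l1 - u (maxn N1 N2)).
by rewrite addrC addrA subrK [nm (l1 - _)]cnorm_subC; lra.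
Qed.

Lemma cvg_shift (u : nat -> V) l : seq_cvg B u l -> seq_cvg B (fun n => u n.+1) l.
Proof. by move=> H e /H [N HN]; exists N => n /leqW /HN. Qed.

Lemma cvg_eq (u v : nat -> V) l : u =1 v -> seq_cvg B u l -> seq_cvg B v l.
Proof. by move=> E H e /H [N HN]; exists N => n /HN; rewrite E. Qed.

Lemma cvg_cstar (u : nat -> V) l : seq_cvg B u l -> seq_cvg B (fun n => (u n)^†) l^†.
Proof. by apply: (cvg_lipschitz ler01) => n; rewrite mul1r -cstarB cnorm_star. Qed.

Lemma cvg_mull (u : nat -> V) l a : seq_cvg B u l -> seq_cvg B (fun n => a ** u n) (a ** l).
Proof. by apply: (cvg_lipschitz (cnorm_ge0 a)) => n; rewrite -cmulBr cnormM. Qed.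

Lemma cvg_mulr (u : nat -> V) l a : seq_cvg B u l -> seq_cvg B (fun n => u n ** a) (l ** a).
Proof. by apply: (cvg_lipschitz (cnorm_ge0 a)) => n; rewrite -cmulBl mulrC cnormM. Qed.

Lemma clspan_sub (S : V -> Prop) v : S v -> clspan B S v.
Proof. by move=> Sv T _ _; apply. Qed.

Lemma clspan_subspace (S : V -> Prop) : is_subspace (clspan B S).
Proof.
split; [|split] => [T [] //|x y Sx Sy T hT cT ST|a x Sx T hT cT ST].
  by apply: hT.2.1; [apply: Sx | apply: Sy].
by apply: hT.2.2; apply: Sx.
Qed.

Lemma clspan_closed (S : V -> Prop) : is_closed B (clspan B S).
Proof. by move=> u l Su cvg_u T hT cT ST; apply: (cT u) => // n; apply: Su. Qed.

Lemma clspan_min (S T : V -> Prop) : is_subspace T -> is_closed B T ->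
  (forall x, S x -> T x) -> forall v, clspan B S v -> T v.
Proof. by move=> hT cT ST v; apply. Qed.

Lemma clspan_mono (S T : V -> Prop) : (forall x, S x -> T x) ->
  forall v, clspan B S v -> clspan B T v.
Proof.
move=> ST; apply: clspan_min; [exact: clspan_subspace | exact: clspan_closed |].
by move=> x /ST /clspan_sub.
Qed.

End CstarAlgebraTheory.

Fixpoint pmcoef (N k : nat) : int :=
  if N is N'.+1 then (if k is k'.+1 then pmcoef N' k' else 0) - pmcoef N' k
  else if (k <= 1)%N then 1 else 0.

Lemma pmcoef_eq0 N k : (N.+2 <= k)%N -> pmcoef N k = 0.
Proof.
elim: N k => [|N IH] [|k] //= lt_Nk; first by case: k lt_Nk.
by rewrite !IH // ltnW.
Qed.

Lemma expand_pmcoef (R : nzRingType) (w : R) N :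
  (w + 1) * (w - 1) ^+ N = \sum_(k < N.+2) w ^+ k *~ pmcoef N k.
Proof.
elim: N => [|N IH].
  by rewrite expr0 mulr1 !big_ord_recr big_ord0 /= add0r expr0 expr1 addrC.
rewrite exprSr mulrA IH mulrBr mulr1 big_distrl /=.
under [in RHS]eq_bigr do rewrite /= mulrzBr.
rewrite sumrB; congr (_ - _).
  rewrite [in RHS]big_ord_recl /= mulr0z add0r; apply: eq_bigr => k _.
  by rewrite exprSr mulrzAl.
by rewrite [in RHS]big_ord_recr /= pmcoef_eq0 // mulr0z addr0.
Qed.

Definition bin_pred (N k : nat) : nat := if k is k'.+1 then 'C(N, k') else 0.

Lemma pmcoef_bin N k : pmcoef N k = (-1) ^+ (N + k) * ('C(N, k)%:Z - (bin_pred N k)%:Z).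
Proof.
elim: N k => [|N IH] [|k].
- by [].
- by case: k => [|k] //=; rewrite !bin0n subrr mulr0.
- by rewrite /= IH !addn0 /bin_pred !bin0 !subr0 !mulr1 exprS; ring.
rewrite /= !IH /bin_pred.
have -> : 'C(N.+1, k) = ('C(N, k) + bin_pred N k)%N.
  by case: k => [|k]; rewrite /bin_pred ?bin0 ?addn0 // binS addnC.
by rewrite binS !PoszD !addnS addSn !exprS; ring.
Qed.

Lemma leq_bin_succ M k : (k < M)%N -> ('C(M.*2, k) <= 'C(M.*2, k.+1))%N.
Proof.
move=> lt_kM; rewrite -(@leq_pmul2l k.+1) // mul_bin_left leq_mul2r.
by apply/orP; right; lia.
Qed.

Lemma geq_bin_succ M k : (M <= k)%N -> ('C(M.*2, k.+1) <= 'C(M.*2, k))%N.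
Proof.
move=> le_Mk; rewrite -(@leq_pmul2l k.+1) // mul_bin_left leq_mul2r.
by apply/orP; right; lia.
Qed.

Lemma leq_bin_mid M j : ('C(M.*2, M + j) <= 'C(M.*2, M))%N.
Proof.
elim: j => [|j IH]; first by rewrite addn0.
by rewrite addnS; apply: leq_trans (geq_bin_succ (leq_addr j M)) IH.
Qed.

(* [|pmcoef N k| = |C(N, k) - C(N, k - 1)|], and [C(N, k)] increases up to [k = M]
   and decreases after it, so the partial sums telescope. *)
Lemma sum_abs_pmcoef M :
  \sum_(k < (M.*2).+2) `|pmcoef M.*2 k| = (2 * 'C(M.*2, M))%N%:Z.
Proof.
set N := M.*2.
have abs_pmcoef k : `|pmcoef N k| = `|'C(N, k)%:Z - (bin_pred N k)%:Z|.
  by rewrite pmcoef_bin normrM normrX normrN1 expr1n mul1r.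
have rising n : (n <= M)%N -> \sum_(k < n.+1) `|pmcoef N k| = 'C(N, n)%:Z.
  elim: n => [|n IH] le_nM.
    by rewrite big_ord_recr big_ord0 /= add0r abs_pmcoef /bin_pred bin0 subr0.
  rewrite big_ord_recr /= (IH (ltnW le_nM)) abs_pmcoef /bin_pred.
  rewrite ger0_norm ?subr_ge0 ?lez_nat ?leq_bin_succ //.
  by rewrite addrC subrK.
have falling j : (j <= M.+1)%N ->
    \sum_(k < (M + j).+1) `|pmcoef N k| = (2 * 'C(N, M) - 'C(N, M + j))%N%:Z.
  elim: j => [|j IH] le_jM.
    by rewrite addn0 rising //; congr Posz; lia.
  rewrite addnS big_ord_recr /= (IH (ltnW le_jM)) abs_pmcoef /bin_pred.
  have le_succ := geq_bin_succ (leq_addr j M); have le_mid := leq_bin_mid M j.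
  rewrite -/N in le_succ le_mid.
  by rewrite ler0_norm ?subr_le0 ?lez_nat //; lia.
have -> : N.+2 = (M + M.+1).+1 by rewrite /N -addnn; lia.
rewrite falling // (@bin_small N (M + M.+1)) ?subn0 //.
by rewrite /N -addnn; lia.
Qed.

Lemma central_bin_bound M : ('C(M.*2, M) ^ 2 * M.+1 <= 16 ^ M)%N.
Proof.
elim: M => [|M IH] //.
have E1 := mul_bin_diag (M.+1).*2 M; have E2 := mul_bin_down (M.*2).+1 M.
rewrite doubleS /= in E1 E2 *.
set C := 'C(M.*2, M) in IH E2 *.
set C1 := 'C((M.*2).+1, M) in E1 E2; set C2 := 'C((M.*2).+2, M.+1) in E1 *.
have E2' : (M.+1 * C1 = (M.*2).+1 * C)%N by rewrite E2; congr (_ * _)%N; lia.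
have rec_C : (M.+1 * C2 = 2 * (M.*2.+1) * C)%N.
  apply/eqP; rewrite -(@eqn_pmul2l M.+1) //; apply/eqP.
  rewrite -E1 mulnCA E2'.
  have -> : (M.*2).+2 = (2 * M.+1)%N by lia.
  ring.
rewrite -(@leq_pmul2l (M.+1 ^ 2)) ?expn_gt0 //.
have -> : (M.+1 ^ 2 * (C2 ^ 2 * M.+2) = (M.+1 * C2) ^ 2 * M.+2)%N.
  by rewrite expnMn mulnA.
rewrite rec_C.
have step : ((M.*2.+1) ^ 2 * M.+2 <= 4 * M.+1 ^ 3)%N by rewrite -addnn; nia.
apply: (@leq_trans (4 * C ^ 2 * (4 * M.+1 ^ 3))).
  have -> : ((2 * (M.*2.+1) * C) ^ 2 * M.+2 = 4 * C ^ 2 * ((M.*2.+1) ^ 2 * M.+2))%N.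
    by rewrite !expnMn; ring.
  by rewrite leq_mul2l step orbT.
have -> : (4 * C ^ 2 * (4 * M.+1 ^ 3) = 16 * M.+1 ^ 2 * (C ^ 2 * M.+1))%N by ring.
have -> : (M.+1 ^ 2 * 16 ^ M.+1 = 16 * M.+1 ^ 2 * 16 ^ M)%N by rewrite (expnS 16 M); ring.
by rewrite leq_mul2l IH orbT.
Qed.

Lemma pow4_mul_le1 (z p c : RR) (n : nat) : 0 <= z -> 0 < p ->
  z ^+ 2 * p <= c -> c ^+ 2 * n%:R <= p ^+ 2 -> z ^+ 4 * n%:R <= 1.
Proof.
move=> z_ge0 p_gt0 le_zc le_cp.
have zp_ge0 : 0 <= z ^+ 2 * p by rewrite mulr_ge0 ?sqr_ge0 ?ltW.
have n_ge0 : (0 : RR) <= n%:R by rewrite ler0n.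
have c_ge0 : 0 <= c := le_trans zp_ge0 le_zc.
have sq_le : (z ^+ 2 * p) ^+ 2 <= c ^+ 2 by rewrite ler_pXn2r ?nnegrE.
have : z ^+ 4 * n%:R * p ^+ 2 <= 1 * p ^+ 2.
  have -> : z ^+ 4 * n%:R * p ^+ 2 = (z ^+ 2 * p) ^+ 2 * n%:R by ring.
  by rewrite mul1r; apply: le_trans le_cp; apply: ler_wpM2r.
by rewrite ler_pM2r ?exprn_gt0.
Qed.

Lemma small_of_pow4_mul_le1 (e : RR) : 0 < e -> exists N, forall m (z : RR),
  (N <= m)%N -> 0 <= z -> z ^+ 4 * (m.*2.+1)%:R <= 1 -> z < e.
Proof.
move=> e_gt0; have e4_gt0 : 0 < e ^+ 4 by rewrite exprn_gt0.
pose N := Num.bound (e ^+ 4)^-1; exists N => m z Nm z_ge0 z_le.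
have N_gt : (e ^+ 4)^-1 < (m.*2.+1)%:R.
  apply: lt_le_trans (archi_boundP _) _; first by rewrite invr_ge0 ltW.
  by rewrite ler_nat; lia.
have n_gt0 : (0 : RR) < (m.*2.+1)%:R by rewrite ltr0n.
have one_lt : 1 < e ^+ 4 * (m.*2.+1)%:R.
  by rewrite -[X in X < _](@mulfV _ (e ^+ 4)) ?gt_eqF // ltr_pM2l.
have : z ^+ 4 * (m.*2.+1)%:R < e ^+ 4 * (m.*2.+1)%:R := le_lt_trans z_le one_lt.
by rewrite ltr_pM2r // ltr_pXn2r // nnegrE ltW.
Qed.

Fixpoint majorant (k : nat) : RR :=
  if k is k'.+1 then 2^-1 * (1 + majorant k' ^+ 2) else 0.

Lemma majorant_ge0_le1 k : 0 <= majorant k <= 1.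
Proof.
elim: k => [|k /andP[m_ge0 m_le1]] /=; first by rewrite lexx ler01.
by apply/andP; split; nra.
Qed.

Lemma majorant_rate n : (1 - majorant n) * (n%:R + 2) <= 2.
Proof.
elim: n => [|n IH] /=; first by rewrite subr0 add0r mul1r.
have /andP[m_ge0 m_le1] := majorant_ge0_le1 n.
set e := 1 - majorant n in IH; set N := (n%:R : RR) + 2 in IH.
have -> : 1 - 2^-1 * (1 + majorant n ^+ 2) = e - e ^+ 2 / 2 by rewrite /e; field.
have -> : (n.+1%:R : RR) + 2 = N + 1 by rewrite /N -natr1; ring.
have N_ge2 : 2 <= N by rewrite /N ler_wpDl ?ler0n.
have e_ge0 : 0 <= e by rewrite /e subr_ge0.
have key : 0 <= N ^+ 2 * (2 - (e - e ^+ 2 / 2) * (N + 1)).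
  have -> : N ^+ 2 * (2 - (e - e ^+ 2 / 2) * (N + 1)) =
    (4 + (2 - e * N) * ((N + 1) * (N - 2)) * 2 + (N + 1) * (2 - e * N) ^+ 2) / 2.
    by field.
  have : 0 <= (2 - e * N) * ((N + 1) * (N - 2)) by apply: mulr_ge0; nra.
  have : 0 <= (N + 1) * (2 - e * N) ^+ 2 by apply: mulr_ge0; [lra | exact: sqr_ge0].
  by move=> *; apply: divr_ge0; lra.
by rewrite pmulr_rge0 ?exprn_gt0 in key; lra.
Qed.

Section SquareRoot.
Variable V : lmodType CC.
Variable B : cstar_algebra V.
Local Notation "x ** y" := (cmul B x y) (at level 40, left associativity).
Local Notation "x ^†" := (cstar B x) (at level 2, format "x ^†").
Local Notation nm := (cnorm B).

Definition half : CC := (2^-1 : RR)%:C%C.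

Lemma cnorm_half v : nm (half *: v) = 2^-1 * nm v.
Proof. by rewrite cnormZ_real ger0_norm // invr_ge0 ler0n. Qed.

Lemma cnorm_half_le v c : nm v <= c -> nm (half *: v) <= 2^-1 * c.
Proof. by rewrite cnorm_half; apply: ler_wpM2l; rewrite invr_ge0 ler0n. Qed.

Lemma half_halfK (v : V) : half *: v + half *: v = v.
Proof.
rewrite -scalerDl /half -rmorphD /=.
have -> : (2^-1 + 2^-1 : RR) = 1 by field.
by rewrite scale1r.
Qed.

Variable a : V.
Hypothesis a_sa : a^† = a.
Hypothesis a_le1 : nm a <= 1.

(* Fixed-point iteration [s <- (a + s^2)/2] for [s = 1 - sqrt (1 - a)]. *)
Fixpoint sqrt_iter (k : nat) : V :=
  if k is k'.+1 then half *: (a + sqrt_iter k' ** sqrt_iter k') else 0.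

Lemma sqrt_iter_comm c : c ** a = a ** c -> forall k, c ** sqrt_iter k = sqrt_iter k ** c.
Proof.
move=> ca; elim=> [|k IH] /=; first by rewrite cmul0l cmul0r.
rewrite cmulZr cmulZl cmulDr cmulDl ca; congr (_ *: (_ + _)).
by rewrite cmulA IH -cmulA IH cmulA.
Qed.

Lemma sqrt_iter_commute j k : sqrt_iter j ** sqrt_iter k = sqrt_iter k ** sqrt_iter j.
Proof. by apply: sqrt_iter_comm; symmetry; apply: sqrt_iter_comm. Qed.

Lemma sqrt_iter_sa k : (sqrt_iter k)^† = sqrt_iter k.
Proof.
elim: k => [|k IH] /=; first exact: cstar0.
by rewrite cstarZ cstarD cstarM IH a_sa conjc_real.
Qed.

Lemma cnorm_sqrt_iter k : nm (sqrt_iter k) <= majorant k.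
Proof.
elim: k => [|k IH] /=; first by rewrite cnorm0.
apply: cnorm_half_le; apply: le_trans (cnormD B _ _) (lerD a_le1 _).
by apply: le_trans (cnormM B _ _) _; rewrite expr2 ler_pM ?cnorm_ge0.
Qed.

Lemma cnorm_sqrt_iter_step k :
  nm (sqrt_iter k.+1 - sqrt_iter k) <= majorant k.+1 - majorant k.
Proof.
elim: k => [|k IH].
  rewrite /= !subr0 cmul0l addr0; apply: le_trans (cnorm_half_le a_le1) _.
  by rewrite expr0n addr0.
set x := sqrt_iter k.+1; set y := sqrt_iter k.
have -> : sqrt_iter k.+2 - x = half *: ((x - y) ** (x + y)).
  rewrite [sqrt_iter k.+2]/= -/x [x in _ - x]/= -/y -scalerBr; congr (_ *: _).
  rewrite cmulDr !cmulBl [y ** x]sqrt_iter_commute -/x -/y.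
  by rewrite opprD addrACA subrr add0r addrA subrK.
have -> : majorant k.+2 - majorant k.+1 =
    2^-1 * ((majorant k.+1 - majorant k) * (majorant k.+1 + majorant k)).
  by rewrite [majorant k.+2]/= [majorant k.+1]/=; field.
apply: cnorm_half_le; apply: le_trans (cnormM B _ _) _.
apply: ler_pM (cnorm_ge0 _ _) (cnorm_ge0 _ _) IH _.
by apply: le_trans (cnormD B _ _) (lerD (cnorm_sqrt_iter _) (cnorm_sqrt_iter _)).
Qed.

Lemma cnorm_sqrt_iterB n m : (n <= m)%N ->
  nm (sqrt_iter m - sqrt_iter n) <= majorant m - majorant n.
Proof.
elim: m => [|m IH]; first by rewrite leqn0 => /eqP ->; rewrite !subrr cnorm0.
rewrite leq_eqVlt => /orP[/eqP ->|/IH le_mn]; first by rewrite !subrr cnorm0.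
rewrite -(subrKA (sqrt_iter m)).
apply: le_trans (cnormD B _ _) _.
by have := cnorm_sqrt_iter_step m; lra.
Qed.

Lemma sqrt_iter_cauchy (e : RR) : 0 < e -> exists N, forall m n,
  (N <= m)%N -> (N <= n)%N -> nm (sqrt_iter m - sqrt_iter n) < e.
Proof.
move=> e_gt0; pose N := Num.bound (2 / e).
have N_gt : 2 / e < N%:R by apply: archi_boundP; rewrite divr_ge0 ?ltW.
suff small m n : (N <= n)%N -> (n <= m)%N -> nm (sqrt_iter m - sqrt_iter n) < e.
  exists N => m n Nm Nn; case: (leqP n m) => [|/ltnW] ?; first exact: small.
  by rewrite cnorm_subC; apply: small.
move=> Nn nm_le; apply: le_lt_trans (cnorm_sqrt_iterB nm_le) _.
have /andP[_ m_le1] := majorant_ge0_le1 m.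
have := majorant_rate n.
have Nn' : (N%:R : RR) <= n%:R by rewrite ler_nat.
have n_ge0 : (0 : RR) <= n%:R by rewrite ler0n.
have : 2 < e * (n%:R + 2) by rewrite ltr_pdivrMr // in N_gt; nra.
by nra.
Qed.

Lemma cstar_sqrt : exists r, [/\ r^† = r,
  forall c, c ** a = a ** c -> c ** r = r ** c & r + r = a + r ** r].
Proof.
have [l cvg_l] := ccomplete sqrt_iter_cauchy.
have {}cvg_l : seq_cvg B sqrt_iter l by [].
exists l; split.
- apply/esym/(cvg_unique cvg_l)/(cvg_eq sqrt_iter_sa).
  exact: cvg_cstar.
- move=> c ca; apply: (cvg_unique (cvg_mull c cvg_l)).
  by apply: (cvg_eq (fun n => esym (sqrt_iter_comm ca n))); apply: cvg_mulr.
have l_fix : l = half *: (a + l ** l).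
  apply: (cvg_unique (cvg_shift cvg_l)).
  have l_ge0 := cnorm_ge0 B l.
  apply: (cvg_lipschitz (K := 2^-1 * (1 + nm l))) cvg_l; first by nra.
  move=> n /=; rewrite -scalerBr -mulrA; apply: cnorm_half_le.
  set s := sqrt_iter n.
  have -> : a + s ** s - (a + l ** l) = s ** (s - l) + (s - l) ** l.
    by rewrite cmulBr cmulBl addrA subrK opprD addrACA subrr add0r.
  apply: le_trans (cnormD B _ _) _.
  have := cnormM B s (s - l); have := cnormM B (s - l) l.
  have := cnorm_sqrt_iter n; have /andP[_ ?] := majorant_ge0_le1 n.
  have := cnorm_ge0 B (s - l); have := cnorm_ge0 B s.
  by nra.
by rewrite {1 2}l_fix half_halfK.
Qed.

End SquareRoot.

(* [(c, x)] stands for [c 1 + x]; [B] is needed to define the product. *)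
Definition unitization (V : lmodType CC) (B : cstar_algebra V) : Type := (CC * V)%type.

Section Unitization.
Variable V : lmodType CC.
Variable B : cstar_algebra V.
Local Notation "x ** y" := (cmul B x y) (at level 40, left associativity).
Local Notation "x ^†" := (cstar B x) (at level 2, format "x ^†").
Local Notation nm := (cnorm B).
Local Notation U := (unitization B).

HB.instance Definition _ := GRing.Zmodule.on U.

Definition unitization_mul (p q : U) : U :=
  (p.1 * q.1, p.1 *: q.2 + q.1 *: p.2 + p.2 ** q.2).

Lemma unitization_mulA : associative unitization_mul.
Proof.
move=> [a x] [b y] [c z]; rewrite /unitization_mul /=; congr pair; first by rewrite mulrA.
rewrite !scalerDr !cmulDl !cmulDr !cmulZl !cmulZr !scalerA cmulA [c * a]mulrC [c * b]mulrC.
rewrite -!addrA; congr (_ + _); congr (_ + _).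
rewrite (addrCA (a *: (y ** z))); congr (_ + _).
by rewrite (addrCA (c *: (x ** y))) addrCA.
Qed.

Lemma unitization_mul1l : left_id (1, 0) unitization_mul.
Proof.
by move=> [b y]; rewrite /unitization_mul /= mul1r scale1r scaler0 cmul0l !addr0.
Qed.

Lemma unitization_mul1r : right_id (1, 0) unitization_mul.
Proof.
by move=> [b y]; rewrite /unitization_mul /= mulr1 scale1r scaler0 cmul0r add0r addr0.
Qed.

Lemma unitization_mulDl : left_distributive unitization_mul +%R.
Proof.
move=> [a x] [b y] [c z]; rewrite /unitization_mul /=; congr pair; first exact: mulrDl.
rewrite !scalerDl !scalerDr cmulDl -!addrA; congr (_ + _); rewrite addrCA; congr (_ + _).
by rewrite /= (addrCA (x ** z)) (addrCA (x ** z)).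
Qed.

Lemma unitization_mulDr : right_distributive unitization_mul +%R.
Proof.
move=> [a x] [b y] [c z]; rewrite /unitization_mul /=; congr pair; first exact: mulrDr.
rewrite !scalerDl !scalerDr cmulDr -!addrA; congr (_ + _); rewrite addrCA; congr (_ + _).
by rewrite /= (addrCA (x ** y)) (addrCA (x ** y)).
Qed.

Lemma unitization_one_neq0 : ((1, 0) : U) != 0.
Proof. by apply/eqP => -[] /eqP; rewrite oner_eq0. Qed.

HB.instance Definition _ := GRing.Zmodule_isNzRing.Build U
  unitization_mulA unitization_mul1l unitization_mul1r
  unitization_mulDl unitization_mulDr unitization_one_neq0.

Definition inU (x : V) : U := (0, x).
Definition scalarU (c : CC) : U := (c, 0).
Definition adjU (p : U) : U := ((p.1)^*%C, (p.2)^†).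
(* The unitization carries no norm: its elements are measured through their
   right action on the ideal [V]. *)
Definition mulVU (y : V) (w : U) : V := (inU y * w).2.

Lemma mulUE (p q : U) : p * q = (p.1 * q.1, p.1 *: q.2 + q.1 *: p.2 + p.2 ** q.2).
Proof. by []. Qed.

Lemma inU_inj : injective inU.
Proof. by move=> x y []. Qed.

Lemma inUD x y : inU (x + y) = inU x + inU y.
Proof. by rewrite /inU; congr pair; rewrite addr0. Qed.

Lemma inUN x : inU (- x) = - inU x.
Proof. by rewrite /inU; congr pair; rewrite oppr0. Qed.

Lemma inUB x y : inU (x - y) = inU x - inU y.
Proof. by rewrite inUD inUN. Qed.

Lemma inUM x y : inU x * inU y = inU (x ** y).
Proof. by rewrite mulUE /inU /= mulr0 !scale0r !add0r. Qed.

Lemma inUMl y (w : U) : inU y * w = inU (mulVU y w).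
Proof. by rewrite /mulVU mulUE /inU /= mul0r. Qed.

Lemma mulVUM y (v w : U) : mulVU y (v * w) = mulVU (mulVU y v) w.
Proof. by apply: inU_inj; rewrite -!inUMl mulrA. Qed.

Lemma mulVU_inU y x : mulVU y (inU x) = y ** x.
Proof. by apply: inU_inj; rewrite -inUMl inUM. Qed.

Lemma mulVU_is_zmod_morphism y : zmod_morphism (mulVU y).
Proof. by move=> v w; rewrite /mulVU mulrBr. Qed.

HB.instance Definition _ y :=
  GRing.isZmodMorphism.Build U V (mulVU y) (mulVU_is_zmod_morphism y).

Lemma scalarU_comm (c : CC) (p : U) : scalarU c * p = p * scalarU c.
Proof.
rewrite !mulUE /scalarU /= !scaler0 cmul0l cmul0r add0r !addr0; congr pair; exact: mulrC.
Qed.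

Lemma scalarUM (c d : CC) : scalarU c * scalarU d = scalarU (c * d).
Proof. by rewrite mulUE /scalarU /= !scaler0 cmul0l !addr0. Qed.

Lemma scalarUN (c : CC) : scalarU (- c) = - scalarU c.
Proof. by rewrite /scalarU; congr pair; rewrite oppr0. Qed.

Lemma adjUD p q : adjU (p + q) = adjU p + adjU q.
Proof. by rewrite /adjU /= rmorphD cstarD. Qed.

Lemma adjUN p : adjU (- p) = - adjU p.
Proof. by rewrite /adjU /= rmorphN cstarN. Qed.

Lemma adjUB p q : adjU (p - q) = adjU p - adjU q.
Proof. by rewrite adjUD adjUN. Qed.

Lemma adjUM p q : adjU (p * q) = adjU q * adjU p.
Proof.
case: p q => [a x] [b y]; rewrite !mulUE /adjU /=; congr pair.
  by rewrite rmorphM mulrC.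
by rewrite !cstarD !cstarZ cstarM [_ *: y^† + _]addrC.
Qed.

Lemma adjU1 : adjU 1 = 1.
Proof. by rewrite /adjU /= cstar0 oppr0. Qed.

Lemma adjU_inU x : adjU (inU x) = inU x^†.
Proof. by rewrite /adjU /inU /= oppr0. Qed.

Lemma adjU_scalar c : adjU (scalarU c) = scalarU c^*%C.
Proof. by rewrite /adjU /scalarU /= cstar0. Qed.

Lemma adjUX p n : adjU (p ^+ n) = adjU p ^+ n.
Proof. by elim: n => [|n IH]; rewrite ?adjU1 // exprS adjUM IH -exprSr. Qed.

Definition unitaryU (w : U) : Prop := w * adjU w = 1.

Lemma unitaryUX w n : unitaryU w -> unitaryU (w ^+ n).
Proof.
rewrite /unitaryU => ww; elim: n => [|n IH]; first by rewrite expr0 adjU1 mulr1.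
by rewrite exprSr adjUM mulrA -(mulrA (w ^+ n)) ww mulr1.
Qed.

Lemma cnorm_mulVU_unitary y w : unitaryU w -> nm (mulVU y w) = nm y.
Proof.
move=> ww; set z := mulVU y w.
have zz : z ** z^† = y ** y^†.
  apply: inU_inj; rewrite -!inUM -!adjU_inU /z -inUMl adjUM mulrA.
  by rewrite -(mulrA (inU y)) ww mulr1.
have := cnorm_mul_cstar B z; rewrite zz cnorm_mul_cstar => /eqP.
by rewrite eq_sym eqrXn2 ?cnorm_ge0 // => /eqP.
Qed.

Lemma cnorm_mulVU_sum y n (c : nat -> int) w : unitaryU w ->
  nm (mulVU y (\sum_(k < n) w ^+ k *~ c k)) <= (\sum_(k < n) `|c k|%:~R) * nm y.
Proof.
move=> ww; rewrite raddf_sum big_distrl /=; apply: le_trans (cnorm_sum B _ _) _.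
apply: ler_sum => k _.
by rewrite raddfMz cnormMz cnorm_mulVU_unitary //; apply: unitaryUX.
Qed.

End Unitization.

Lemma mulrDB_comm (T : pzRingType) (P Q : T) : GRing.comm P Q ->
  (P + Q) * (P - Q) = P * P - Q * Q.
Proof. by move=> PQ; rewrite mulrDl !mulrBr PQ addrA subrK. Qed.

Lemma sqr_1subr (T : pzRingType) (x a : T) : x + x = a + x * x ->
  (1 - x) * (1 - x) = 1 - a.
Proof.
move=> xx; have -> : a = x + x - x * x by rewrite xx addrK.
by rewrite mulrBr mulr1 mulrBl mul1r !opprB !addrA opprD !addrA [1 - x + _]addrAC.
Qed.

Lemma conjc_i : ('i%C : CC)^*%C = - 'i%C.
Proof. by apply/eqP; rewrite eq_complex /= oppr0 !eqxx. Qed.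

Section UnitaryEstimate.
Variable V : lmodType CC.
Variable B : cstar_algebra V.
Local Notation "x ** y" := (cmul B x y) (at level 40, left associativity).
Local Notation "x ^†" := (cstar B x) (at level 2, format "x ^†").
Local Notation nm := (cnorm B).
Local Notation U := (unitization B).
Local Notation inU := (@inU V B).
Local Notation adjU := (@adjU V B).
Local Notation mulVU := (@mulVU V B).

Variables h r : V.
Hypothesis h_sa : h^† = h.
Hypothesis r_sa : r^† = r.
Hypothesis hr : h ** r = r ** h.
Hypothesis r_sqrt : r + r = h ** h + r ** r.

(* [S = sqrt (1 - h^2)], so that [h + i S] is unitary with real part [h]. *)
Let H : U := inU h.
Let S : U := 1 - inU r.
Let I : U := scalarU B 'i.
Let u : U := H + I * S.
Let ud : U := H - I * S.

Let S_sqr : S * S = 1 - H * H.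
Proof. by apply: sqr_1subr; rewrite !inUM -!inUD r_sqrt. Qed.

Let HS_comm : GRing.comm H S.
Proof. by rewrite /GRing.comm /H /S mulrBr mulrBl mulr1 mul1r !inUM hr. Qed.

Let H_IS_comm : GRing.comm H (I * S).
Proof.
by rewrite /GRing.comm mulrA -scalarU_comm -mulrA HS_comm mulrA.
Qed.

Let I_sqr : I * I = -1.
Proof. by rewrite /I scalarUM -expr2 sqr_i scalarUN. Qed.

Let IS_sqr : (I * S) * (I * S) = - (S * S).
Proof. by rewrite -mulrA (mulrA S) -scalarU_comm !mulrA I_sqr mulN1r mulNr. Qed.

Let u_ud : u * ud = 1.
Proof.
rewrite /u /ud mulrDB_comm; last exact: H_IS_comm.
by rewrite IS_sqr opprK S_sqr addrC subrK.
Qed.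

Let ud_u : ud * u = 1.
Proof.
rewrite /u /ud -{2}[I * S]opprK mulrDB_comm; last exact/commrN/H_IS_comm.
by rewrite mulrNN IS_sqr opprK S_sqr addrC subrK.
Qed.

Let adjU_u : adjU u = ud.
Proof.
rewrite /u /ud adjUD adjUM /H /S /I adjU_inU adjUB adjU1 adjU_inU h_sa r_sa.
by rewrite adjU_scalar conjc_i scalarUN mulrN scalarU_comm.
Qed.

Let unitary_u : unitaryU u.
Proof. by rewrite /unitaryU adjU_u u_ud. Qed.

Let uud_expand m :
  (u + ud) * (u - ud) ^+ (4 * m) = (H * S ^+ (4 * m)) *+ (2 * 2 ^ (4 * m)).
Proof.
have -> : u + ud = H *+ 2 by rewrite /u /ud addrACA subrr addr0 mulr2n.
have -> : u - ud = (I * S) *+ 2 by rewrite /u /ud opprB addrC addrA subrK mulr2n.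
rewrite exprMn_n exprMn_comm; last exact: scalarU_comm.
have I4 : I ^+ 4 = 1 by rewrite (exprM I 2 2) [I ^+ 2]expr2 I_sqr sqrrN expr1n.
by rewrite exprM I4 expr1n mul1r mulrnAl mulrnAr -mulrnA [(2 ^ _ * 2)%N]mulnC.
Qed.

Let u_polynomial N :
  ((u + ud) * (u - ud) ^+ N) * u ^+ N.+1 = (u ^+ 2 + 1) * (u ^+ 2 - 1) ^+ N.
Proof.
have u_comm : GRing.comm (u - ud) u by rewrite /GRing.comm mulrBl mulrBr u_ud ud_u.
rewrite exprS -mulrA (mulrA _ u) -(commrX N (esym u_comm)) -mulrA (mulrA (u + ud)).
by rewrite -exprMn_comm // (mulrDl u ud u) (mulrBl u u ud) ud_u expr2.
Qed.

(* With [2 h = u + u^*] and [2 i S = u - u^*], multiplying [2^(4m+1) h S^(4m)] by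
   the unitary [u^(4m+1)] gives [(u^2 + 1) (u^2 - 1)^(4m)], whose coefficients
   have absolute sum [2 C(4m, 2m)]. *)
Lemma cnorm_mulVU_damped_of_sqrt m y :
  nm (mulVU y (inU h * (1 - inU h * inU h) ^+ (2 * m))) * (2 ^ (4 * m))%:R
    <= 'C(4 * m, 2 * m)%:R * nm y.
Proof.
set N := (4 * m)%N.
have -> : inU h * (1 - inU h * inU h) ^+ (2 * m) = H * S ^+ N.
  by rewrite -S_sqr -expr2 -exprM mulnA.
have expand : nm (mulVU y ((u + ud) * (u - ud) ^+ N)) =
    (2 * 2 ^ N)%:R * nm (mulVU y (H * S ^+ N)).
  by rewrite uud_expand raddfMn cnormMn.
have sum_coef : \sum_(k < N.+2) `|pmcoef N k|%:~R = (2 * 'C(N, 2 * m))%:R :> RR.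
  have -> : N = (2 * m).*2 by rewrite /N -muln2; lia.
  by rewrite -rmorph_sum /= sum_abs_pmcoef.
have poly : nm (mulVU y ((u + ud) * (u - ud) ^+ N)) <= (2 * 'C(N, 2 * m))%:R * nm y.
  rewrite -(cnorm_mulVU_unitary _ (unitaryUX N.+1 unitary_u)) -mulVUM u_polynomial.
  rewrite -sum_coef expand_pmcoef.
  exact: cnorm_mulVU_sum (unitaryUX 2 unitary_u).
rewrite expand !natrM -mulrA -mulrA ler_pM2l ?ltr0n // in poly.
by rewrite mulrC.
Qed.

End UnitaryEstimate.

Lemma cnorm_mulVU_damped (V : lmodType CC) (B : cstar_algebra V) (h y : V) m :
  cstar B h = h -> cnorm B h <= 1 ->
  cnorm B (mulVU y (inU B h * (1 - inU B h * inU B h) ^+ (2 * m))) * (2 ^ (4 * m))%:R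
    <= 'C(4 * m, 2 * m)%:R * cnorm B y.
Proof.
move=> h_sa h_le1.
have hh_sa : cstar B (cmul B h h) = cmul B h h by rewrite cstarM h_sa.
have hh_le1 : cnorm B (cmul B h h) <= 1.
  by apply: le_trans (cnormM B h h) _; rewrite -expr2 exprn_ile1 ?cnorm_ge0.
have [r [r_sa r_comm r_sqrt]] := cstar_sqrt hh_sa hh_le1.
have hr : cmul B h r = cmul B r h by apply: r_comm; rewrite cmulA.
exact: (cnorm_mulVU_damped_of_sqrt h_sa r_sa hr r_sqrt).
Qed.

Section Damping.
Variable V : lmodType CC.
Variable B : cstar_algebra V.
Local Notation "x ** y" := (cmul B x y) (at level 40, left associativity).
Local Notation "x ^†" := (cstar B x) (at level 2, format "x ^†").
Local Notation nm := (cnorm B).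
Local Notation inU := (@inU V B).

Fixpoint damp (x h : V) (m : nat) : V :=
  if m is m'.+1 then damp x h m' - damp x h m' ** h ** h else x.

Lemma inU_damp x h m : inU (damp x h m) = inU x * (1 - inU h * inU h) ^+ m.
Proof.
elim: m => [|m IH] /=; first by rewrite mulr1.
by rewrite inUB -!inUM IH exprSr !mulrA mulrBr mulr1 !mulrA.
Qed.

Lemma clspan_damp_defect (I : V -> Prop) x h : I h -> forall m,
  clspan B (prodset B (@setB V) I) (x - damp x h m).
Proof.
move=> Ih; have [span0 [spanD _]] := clspan_subspace B (prodset B (@setB V) I).
elim=> [|m IH] /=; first by rewrite subrr.
rewrite opprB addrA addrAC; apply: spanD => //; apply: clspan_sub.
by exists (damp x h m ** h), h.
Qed.

Section Contraction.
Variable x : V.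
Hypothesis x_le1 : nm x <= 1.
Local Notation h := (x^† ** x).

Lemma cnorm_damp_cstar_mul m :
  nm ((damp x h m)^† ** damp x h m) * (2 ^ (4 * m))%:R <= 'C(4 * m, 2 * m)%:R.
Proof.
have h_sa : h^† = h := cstar_cstar_mul B x.
have h_le1 : nm h <= 1 by rewrite cnorm_cstar exprn_ile1 ?cnorm_ge0.
have P_comm : GRing.comm (inU h) (1 - inU h * inU h).
  by apply: commrB; [exact: commr1 | apply: commrM; exact: commr_refl].
set w := damp x h m; set e := w^† ** w.
have e_sa : e^† = e := cstar_cstar_mul B w.
have inU_e : inU e = inU h * (1 - inU h * inU h) ^+ (2 * m).
  rewrite /e -inUM -adjU_inU /w inU_damp adjUM adjUX adjUB adjU1 adjUM !adjU_inU h_sa.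
  rewrite mulrA -(mulrA _ (inU x^†)) (inUM B x^† x) -(commrX m P_comm) -mulrA -exprD.
  by rewrite addnn -mul2n.
have bound := cnorm_mulVU_damped e m h_sa h_le1.
rewrite -inU_e mulVU_inU -{1}e_sa cnorm_cstar in bound.
have [->|e_neq0] := eqVneq (nm e) 0; first by rewrite mul0r ler0n.
have e_gt0 : 0 < nm e by rewrite lt_def e_neq0 cnorm_ge0.
by rewrite expr2 -mulrA [_ * nm e]mulrC ler_pM2l in bound.
Qed.

Lemma cnorm_damp m : nm (damp x h m) ^+ 4 * (m.*2.+1)%:R <= 1.
Proof.
apply: (@pow4_mul_le1 _ (2 ^ (4 * m))%:R 'C(4 * m, 2 * m)%:R).
- exact: cnorm_ge0.
- by rewrite ltr0n expn_gt0.
- by rewrite -cnorm_cstar; apply: cnorm_damp_cstar_mul.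
rewrite -!natrX -natrM ler_nat.
have -> : ((2 ^ (4 * m)) ^ 2 = 16 ^ (2 * m))%N.
  by rewrite (_ : 16 = 2 ^ 4)%N // -!expnM; congr (2 ^ _)%N; lia.
have -> : (4 * m = (2 * m).*2)%N by lia.
have -> : m.*2.+1 = (2 * m).+1 by lia.
exact: central_bin_bound.
Qed.

Lemma cvg_damp : seq_cvg B (fun m => x - damp x h m) x.
Proof.
move=> e /small_of_pow4_mul_le1[N small]; exists N => m Nm.
by rewrite addrAC subrr add0r cnormN; apply: small Nm (cnorm_ge0 _ _) (cnorm_damp m).
Qed.

End Contraction.

Lemma clspan_BI_of_cstar_mul_le1 (I : V -> Prop) x :
  nm x <= 1 -> I (x^† ** x) -> clspan B (prodset B (@setB V) I) x.
Proof.
move=> x_le1 Ih.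
exact: clspan_closed (clspan_damp_defect x Ih) (cvg_damp x_le1).
Qed.

Lemma clspan_BI_of_cstar_mul (I : V -> Prop) x :
  (forall (a : CC) y, I y -> I (a *: y)) -> I (x^† ** x) ->
  clspan B (prodset B (@setB V) I) x.
Proof.
move=> IZ Ix; have [x0|x_neq0] := eqVneq (nm x) 0.
  by rewrite (cnorm_eq0 x0); have [] := clspan_subspace B (prodset B (@setB V) I).
have x_gt0 : 0 < nm x by rewrite lt_def x_neq0 cnorm_ge0.
pose c : RR := (nm x)^-1.
have -> : x = (nm x)%:C%C *: (c%:C%C *: x).
  by rewrite scalerA -rmorphM /= divff // scale1r.
apply: (clspan_subspace B _).2.2; apply: clspan_BI_of_cstar_mul_le1.
  by rewrite cnormZ_real gtr0_norm ?invr_gt0 // mulVf.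
by rewrite cstarZ conjc_real cmulZl cmulZr; apply/IZ/IZ.
Qed.

End Damping.

Section Opposite.
Variable V : lmodType CC.
Variable B : cstar_algebra V.

Definition opposite_mul (x y : V) : V := cmul B y x.

Lemma opposite_mulA x y z :
  opposite_mul x (opposite_mul y z) = opposite_mul (opposite_mul x y) z.
Proof. by rewrite /opposite_mul cmulA. Qed.

Lemma opposite_mulDl x y z :
  opposite_mul (x + y) z = opposite_mul x z + opposite_mul y z.
Proof. exact: cmulDr. Qed.

Lemma opposite_mulDr x y z :
  opposite_mul x (y + z) = opposite_mul x y + opposite_mul x z.
Proof. exact: cmulDl. Qed.

Lemma opposite_mulZl (a : CC) x y : opposite_mul (a *: x) y = a *: opposite_mul x y.
Proof. exact: cmulZr. Qed.

Lemma opposite_mulZr (a : CC) x y : opposite_mul x (a *: y) = a *: opposite_mul x y.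
Proof. exact: cmulZl. Qed.

Lemma opposite_cstarM x y :
  cstar B (opposite_mul x y) = opposite_mul (cstar B y) (cstar B x).
Proof. exact: cstarM. Qed.

Lemma opposite_cnormM x y : cnorm B (opposite_mul x y) <= cnorm B x * cnorm B y.
Proof. by rewrite mulrC; apply: cnormM. Qed.

Lemma opposite_cnorm_cstar x : cnorm B (opposite_mul (cstar B x) x) = cnorm B x ^+ 2.
Proof. exact: cnorm_mul_cstar. Qed.

Definition opposite_cstar_algebra : cstar_algebra V :=
  CstarAlgebra opposite_mulA opposite_mulDl opposite_mulDr opposite_mulZl
    opposite_mulZr (@cstarK _ B) (@cstarD _ B) (@cstarZ _ B) opposite_cstarM
    (@cnorm_eq0 _ B) (@cnormD _ B) (@cnormZ _ B) opposite_cnormM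
    opposite_cnorm_cstar (@ccomplete _ B).

Local Notation Bop := opposite_cstar_algebra.

Lemma prodset_opposite (S T : V -> Prop) v : prodset Bop S T v <-> prodset B T S v.
Proof. by split=> -[s [t [Ss [Tt ->]]]]; exists t, s. Qed.

Lemma clspan_prodset_opposite (S T : V -> Prop) v :
  clspan Bop (prodset Bop S T) v <-> clspan B (prodset B T S) v.
Proof. by split; apply: clspan_mono => w /prodset_opposite. Qed.

Lemma normalizer_opposite (A : V -> Prop) n : normalizer Bop A n <-> normalizer B A n.
Proof.
rewrite /normalizer /= /opposite_mul.
split=> -[h1 h2]; split=> a Aa.
- by rewrite -cmulA; apply: h2.
- by rewrite -cmulA; apply: h1.
- by rewrite cmulA; apply: h2.
- by rewrite cmulA; apply: h1.
Qed.

End Opposite.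

Section NormalizerInvariant.
Variable V : lmodType CC.
Variable B : cstar_algebra V.
Local Notation "x ** y" := (cmul B x y) (at level 40, left associativity).
Local Notation "x ^†" := (cstar B x) (at level 2, format "x ^†").

Lemma normalizer_cstar (A : V -> Prop) n : normalizer B A n -> normalizer B A n^†.
Proof. by move=> [h1 h2]; split=> a Aa; rewrite cstarK; [apply: h2 | apply: h1]. Qed.

Lemma normalizer_invariant_cap (A J : V -> Prop) :
  closed_ideal B J -> normalizer_invariant B A (fun x => J x /\ A x).
Proof. by move=> [_ [_ [JL JR]]] n [_ nA] s [Js As]; split; [apply/JR/JL | apply: nA]. Qed.

Lemma closed_ideal_of_cap (A J : V -> Prop) : closed_star_subalgebra B A ->
  closed_ideal B J -> closed_ideal_of B A (fun x => J x /\ A x).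
Proof.
move=> [[A0 [AD AZ]] [A_closed [AM _]]] [[J0 [JD JZ]] [J_closed [JL JR]]].
split; [by move=> x [] | split; [|split; [|split]]].
- by split; [|split] => [|x y [? ?] [? ?]|a x [? ?]]; split; auto.
- move=> u l uJA cvg_u.
  by split; [apply: (J_closed u) | apply: (A_closed u)] => // k; case: (uJA k).
- by move=> a i Aa [Ji Ai]; split; [apply: JL | apply: AM].
- by move=> a i Aa [Ji Ai]; split; [apply: JR | apply: AM].
Qed.

Lemma clspan_IB_sub_BI (A I : V -> Prop) :
  (forall a, A a -> A a^†) -> (forall b, clspan B (normalizer B A) b) ->
  (forall x, I x -> A x) -> is_subspace I -> (forall a i, A a -> I i -> I (a ** i)) ->
  normalizer_invariant B A I ->
  forall v, clspan B (prodset B I (@setB V)) v -> clspan B (prodset B (@setB V) I) v.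
Proof.
move=> A_star normalizers_dense IA [_ [_ IZ]] IL I_inv.
have [BI0 [BID BIZ]] := clspan_subspace B (prodset B (@setB V) I).
apply: clspan_min; [exact: clspan_subspace | exact: clspan_closed |].
move=> _ [s [b [Is [_ ->]]]].
pose T := fun b => clspan B (prodset B (@setB V) I) (s ** b).
apply: (@clspan_min _ _ (normalizer B A) T); last exact: normalizers_dense.
- split; [|split] => [|x y Tx Ty|a x Tx]; rewrite /T ?cmul0r ?cmulDr ?cmulZr.
  + exact: BI0.
  + exact: BID.
  + exact: BIZ.
- move=> u l Tu cvg_u; exact: clspan_closed Tu (cvg_mull s cvg_u).
move=> n nA; apply: clspan_BI_of_cstar_mul IZ _.
have -> : (s ** n)^† ** (s ** n) = n^† ** (s^† ** s) ** n by rewrite cstarM !cmulA.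
have := I_inv _ (normalizer_cstar nA) _ (IL _ _ (A_star _ (IA _ Is)) Is).
by rewrite cstarK.
Qed.

End NormalizerInvariant.

Section Proposition.
Variable V : lmodType CC.
Variable B : cstar_algebra V.

Lemma B_invariant_of_normalizer_invariant (A I : V -> Prop) :
  closed_star_subalgebra B A -> regular_subalgebra B A ->
  closed_ideal_of B A I -> normalizer_invariant B A I -> B_invariant B I.
Proof.
move=> [_ [_ [_ A_star]]] [normalizers_dense _] [IA [I_sub [_ [IL IR]]]] I_inv v.
split; first exact: (clspan_IB_sub_BI A_star normalizers_dense IA I_sub IL I_inv).
move=> /clspan_prodset_opposite IB_op; apply/clspan_prodset_opposite.
apply: (@clspan_IB_sub_BI _ (opposite_cstar_algebra B) A I A_star _ IA I_sub _ _ _ IB_op).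
- by move=> b; apply: clspan_mono (normalizers_dense b) => n /normalizer_opposite.
- by move=> a i Aa Ii; apply: IR.
move=> n /normalizer_opposite/normalizer_cstar n_adj s Is.
by have := I_inv _ n_adj s Is; rewrite cstarK /= /opposite_mul cmulA.
Qed.

Lemma axiom_inv_of_regular (A : V -> Prop) :
  closed_star_subalgebra B A -> regular_subalgebra B A -> axiom_inv B A.
Proof.
move=> hA hreg J hJ; apply: (B_invariant_of_normalizer_invariant hA hreg).
  exact: closed_ideal_of_cap.
exact: normalizer_invariant_cap.
Qed.

End Proposition.

Theorem proposition4p2 (V : lmodType CC) (B : cstar_algebra V) (A : V -> Prop)
  (hA : closed_star_subalgebra B A) (hreg : regular_subalgebra B A) :
  (forall J : V -> Prop, closed_ideal B J ->
      normalizer_invariant B A (fun x => J x /\ A x)) /\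
  (forall I : V -> Prop, closed_ideal_of B A I ->
      normalizer_invariant B A I -> B_invariant B I) /\
  axiom_inv B A.
Proof.
split; [|split].
- by move=> J; apply: normalizer_invariant_cap.
- by move=> I; apply: B_invariant_of_normalizer_invariant.
- exact: axiom_inv_of_regular.
Qed.
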